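(* Let $(g,f)$ be a Riordan matrix possessing a type-II $B$-sequence $(\hat b_j)_{j\ge0}$ with generating function $\hat B(t)=\sum_{j\ge0}\hat b_jt^j$, and let $Z(t)$ be the generating function of its $Z$-sequence. Then $$g=1+tg\,\hat B(tf),\qquad Z(f)=\hat B(tf),\qquad Z(t)=\hat B(t\bar f(t)).$$
   Context: Let $K$ be $\mathbb{R}$ or $\mathbb{C}$. A (proper) Riordan matrix is a pair $(g,f)$ of formal power series in $K[[t]]$ with $g(0)=1$, $f(0)=0$, $f'(0)\neq 0$, identified with the infinite lower triangular matrix $(d_{n,k})_{n,k\ge0}$, $d_{n,k}=[t^n]g(t)f(t)^k$; we set $d_{n,k}=0$ if $n<0$, $k<0$ or $k>n$. $\bar f$ is the compositional inverse of $f$. The $Z$-sequence of $(g,f)$ is the unique sequence whose generating function $Z(t)$ satisfies $g(t)=1/(1-tZ(f(t)))$. A type-II $B$-sequence of $(g,f)$ is a sequence $(\hat b_j)_{j\ge0}$ such that $d_{n+1,0}=\sum_{j\ge0}\hat b_j d_{n-j,j}$ for all $n\ge0$. *)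

From mathcomp Require Import all_boot all_algebra.
Set Implicit Arguments. Unset Strict Implicit. Unset Printing Implicit Defensive.
Import GRing.Theory.
Local Open Scope ring_scope.

Definition fps (K : fieldType) := nat -> K.

Section FPS.
Variable K : fieldType.

Definition fps1 : fps K := fun n => (n == 0%N)%:R.
Definition fpsT : fps K := fun n => (n == 1%N)%:R.

Definition fps_add (a b : fps K) : fps K := fun n => a n + b n.
Definition fps_sub (a b : fps K) : fps K := fun n => a n - b n.

Definition fps_mul (a b : fps K) : fps K :=
  fun n => \sum_(i < n.+1) a i * b (n - i)%N.

Fixpoint fps_pow (a : fps K) (k : nat) : fps K :=
  match k with 0%N => fps1 | k'.+1 => fps_mul a (fps_pow a k') end.

(* composition a(b) = sum_k a_k b^k, meaningful when b 0 = 0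
   (then b^k has no terms of degree < k, so the sum is finite) *)
Definition fps_comp (a b : fps K) : fps K :=
  fun n => \sum_(k < n.+1) a k * fps_pow b k n.

Definition riordan (g f : fps K) : Prop :=
  g 0%N = 1 /\ f 0%N = 0 /\ f 1%N != 0.

Definition rentry (g f : fps K) (n k : nat) : K := fps_mul g (fps_pow f k) n.

Definition comp_inverse (fb f : fps K) : Prop :=
  fb 0%N = 0 /\ fps_comp f fb = fpsT /\ fps_comp fb f = fpsT.

Definition is_Zseq (g f Z : fps K) : Prop :=
  fps_mul g (fps_sub fps1 (fps_mul fpsT (fps_comp Z f))) = fps1.

(* bh is a type-II B-sequence: d_{n+1,0} = sum_j bh_j d_{n-j,j}
   (terms with n - j < 0 vanish, so j ranges over 0..n) *)
Definition is_typeII_Bseq (g f bh : fps K) : Prop :=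
  forall n : nat, rentry g f n.+1 0 = \sum_(j < n.+1) bh j * rentry g f (n - j)%N j.

End FPS.

(* Coefficients of degree <= n of sums, products, powers and compositions
   (with series of zero constant term) only depend on the truncations at
   degree n, so every identity between series reduces to a polynomial
   identity modulo X^(n+1).
   The type-II B-sequence condition says exactly that [t^n] g B(tf) is
   g_(n+1), whence g = 1 + t g B(tf).  Together with g (1 - t Z(f)) = 1 this
   gives t g Z(f) = g - 1 = t g B(tf); cancelling t and g (whose constant
   term is 1) yields Z(f) = B(tf), and composing on the right with the
   inverse of f yields Z = B(t fb). *)

From mathcomp Require Import all_boot all_algebra.
From mathcomp Require Import zify ring.
From Stdlib Require Import FunctionalExtensionality.
Set Implicit Arguments. Unset Strict Implicit. Unset Printing Implicit Defensive.
Import GRing.Theory.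
Local Open Scope ring_scope.

Section PolyCoefficients.
Variable K : fieldType.
Implicit Types (p q r : {poly K}) (F : nat -> K).

Lemma eq_big_ord_vanish F M N :
  (forall k, (minn M N <= k)%N -> F k = 0) ->
  \sum_(k < M) F k = \sum_(k < N) F k.
Proof.
move=> F0.
suff sumE L : (minn M N <= L)%N -> \sum_(k < L) F k = \sum_(k < minn M N) F k.
  by rewrite !sumE ?geq_minl ?geq_minr.
move=> le_L; rewrite -!(big_mkord xpredT) (big_cat_nat (leq0n _) le_L) /=.
rewrite -[RHS]addr0; congr (_ + _).
by rewrite big_nat_cond big1 // => k /andP[/andP[+ _] _]; apply: F0.
Qed.

Lemma coef_expr_lt q i m : q`_0 = 0 -> (m < i)%N -> (q ^+ i)`_m = 0.
Proof.
move=> q0; elim: i m => [|i IH] m // lt_mi.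
rewrite exprS coefM big1 // => -[[|j] lt_jm] _ /=; first by rewrite q0 mul0r.
by rewrite IH ?mulr0 //; lia.
Qed.

Lemma coef_comp_poly_cut p q m : q`_0 = 0 ->
  (p \Po q)`_m = \sum_(i < m.+1) p`_i * (q ^+ i)`_m.
Proof.
move=> q0; rewrite coef_comp_poly.
apply: (@eq_big_ord_vanish (fun i => p`_i * (q ^+ i)`_m)) => k.
by rewrite geq_min => /orP[/(nth_default 0)->|/(coef_expr_lt q0)->]; rewrite ?mul0r ?mulr0.
Qed.

Lemma coef_mul_comp_XM p q r n :
  (p * (q \Po ('X * r)))`_n = \sum_(j < n.+1) q`_j * (p * r ^+ j)`_(n - j).
Proof.
pose T j := q`_j * (if (n < j)%N then 0 else (p * r ^+ j)`_(n - j)).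
have termE j : (p * (q`_j *: ('X * r) ^+ j))`_n = T j.
  by rewrite -scalerAr coefZ exprMn mulrCA coefXnM.
rewrite comp_polyE mulr_sumr coef_sum.
under eq_bigr do rewrite termE.
rewrite (@eq_big_ord_vanish T _ n.+1).
  by apply: eq_bigr => j _; rewrite /T ltnNge -ltnS ltn_ord.
move=> k; rewrite /T geq_min => /orP[/(nth_default 0)->|lt_nk]; first by rewrite mul0r.
by rewrite lt_nk mulr0.
Qed.

Definition eq_upto n p q := forall m, (m <= n)%N -> p`_m = q`_m.

Lemma eq_uptoB n p q p' q' :
  eq_upto n p p' -> eq_upto n q q' -> eq_upto n (p - q) (p' - q').
Proof. by move=> epp eqq m le_mn; rewrite !coefB epp ?eqq. Qed.

Lemma eq_upto_mulXI n p q : eq_upto n.+1 ('X * p) ('X * q) -> eq_upto n p q.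
Proof. by move=> e m le_mn; have := e m.+1 le_mn; rewrite !coefXM. Qed.

Lemma eq_upto_mulfI n r p q : r`_0 != 0 -> eq_upto n (r * p) (r * q) -> eq_upto n p q.
Proof.
move=> r0 e.
suff d0 m : (m <= n)%N -> (p - q)`_m = 0.
  by move=> m /d0/eqP; rewrite coefB subr_eq0 => /eqP.
elim/ltn_ind: m => m IH le_mn.
have : (r * (p - q))`_m == 0 by rewrite mulrBr coefB e ?subrr.
rewrite coefM big_ord_recl subn0 big1 ?addr0 => [|i _].
  by rewrite mulf_eq0 (negbTE r0) => /eqP.
by have lt_im := ltn_ord i; rewrite IH ?mulr0 //= /bump /=; lia.
Qed.

End PolyCoefficients.

Section PowerSeries.
Variable K : fieldType.
Implicit Types (a b c g f Z : fps K) (p q : {poly K}).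

Definition fps_trunc n a : {poly K} := \poly_(i < n.+1) a i.

Definition agree_upto n a p := forall m, (m <= n)%N -> a m = p`_m.

Lemma agree_upto_trunc n a : agree_upto n a (fps_trunc n a).
Proof. by move=> m le_mn; rewrite coef_poly ltnS le_mn. Qed.

Lemma agree_upto_eq n a p q : agree_upto n a p -> agree_upto n a q -> eq_upto n p q.
Proof. by move=> ap aq m le_mn; rewrite -ap ?aq. Qed.

Lemma agree_upto_coef n a b p : agree_upto n a p -> agree_upto n b p -> a n = b n.
Proof. by move=> ap bp; rewrite ap ?bp. Qed.

Lemma agree_upto1 n : agree_upto n (fps1 K) 1.
Proof. by move=> m _; rewrite coef1. Qed.

Lemma agree_uptoT n : agree_upto n (fpsT K) 'X.
Proof. by move=> m _; rewrite coefX. Qed.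

Lemma agree_uptoD n a b p q :
  agree_upto n a p -> agree_upto n b q -> agree_upto n (fps_add a b) (p + q).
Proof. by move=> ap bq m le_mn; rewrite coefD /fps_add ap ?bq. Qed.

Lemma agree_uptoB n a b p q :
  agree_upto n a p -> agree_upto n b q -> agree_upto n (fps_sub a b) (p - q).
Proof. by move=> ap bq m le_mn; rewrite coefB /fps_sub ap ?bq. Qed.

Lemma agree_uptoM n a b p q :
  agree_upto n a p -> agree_upto n b q -> agree_upto n (fps_mul a b) (p * q).
Proof.
move=> ap bq m le_mn; rewrite coefM; apply: eq_bigr => -[i /= lt_im] _.
by rewrite ap ?bq //; lia.
Qed.

Lemma agree_uptoX n k a p : agree_upto n a p -> agree_upto n (fps_pow a k) (p ^+ k).
Proof.
move=> ap; elim: k => [|k IH] /=; first exact: agree_upto1.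
by rewrite exprS; apply: agree_uptoM.
Qed.

Lemma agree_upto_comp n a b p q : b 0%N = 0 ->
  agree_upto n a p -> agree_upto n b q -> agree_upto n (fps_comp a b) (p \Po q).
Proof.
move=> b0 ap bq m le_mn; have q0 : q`_0 = 0 by rewrite -bq.
rewrite coef_comp_poly_cut //; apply: eq_bigr => -[i /= lt_im] _.
by rewrite ap ?(agree_uptoX i bq le_mn) //; lia.
Qed.

Local Hint Resolve agree_upto_trunc agree_upto1 agree_uptoT : core.
Local Hint Resolve agree_uptoD agree_uptoB agree_uptoM agree_uptoX agree_upto_comp : core.

Lemma fps_mulA a b c : fps_mul a (fps_mul b c) = fps_mul (fps_mul a b) c.
Proof.
apply: functional_extensionality => n; set t := fps_trunc n.
by apply: (@agree_upto_coef n _ _ (t a * (t b * t c))); last rewrite mulrA; auto.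
Qed.

Lemma fps_mulC a b : fps_mul a b = fps_mul b a.
Proof.
apply: functional_extensionality => n; set t := fps_trunc n.
by apply: (@agree_upto_coef n _ _ (t a * t b)); last rewrite mulrC; auto.
Qed.

Lemma fps_mulr1 a : fps_mul a (fps1 K) = a.
Proof.
apply: functional_extensionality => n.
by apply: (@agree_upto_coef n _ _ (fps_trunc n a * 1)); last rewrite mulr1; auto.
Qed.

Lemma coef_fps_mulT a n : fps_mul (fpsT K) a n = if n is n'.+1 then a n' else 0.
Proof.
rewrite (agree_uptoM (@agree_uptoT n) (agree_upto_trunc a) (leqnn n)) coefXM.
by case: n => //= n; rewrite coef_poly ltnS leqnSn.
Qed.

Lemma fps_mulT0 a : fps_mul (fpsT K) a 0%N = 0.
Proof. by rewrite coef_fps_mulT. Qed.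

Local Hint Resolve fps_mulT0 : core.

Lemma fps_compM a b c : c 0%N = 0 ->
  fps_comp (fps_mul a b) c = fps_mul (fps_comp a c) (fps_comp b c).
Proof.
move=> c0; apply: functional_extensionality => n; set t := fps_trunc n.
by apply: (@agree_upto_coef n _ _ ((t a * t b) \Po t c)); last rewrite comp_polyM; auto.
Qed.

Lemma fps_compA a b c : b 0%N = 0 -> c 0%N = 0 ->
  fps_comp a (fps_comp b c) = fps_comp (fps_comp a b) c.
Proof.
move=> b0 c0; have bc0 : fps_comp b c 0%N = 0 by rewrite /fps_comp big_ord1 /= b0 mul0r.
apply: functional_extensionality => n; set t := fps_trunc n.
by apply: (@agree_upto_coef n _ _ (t a \Po (t b \Po t c))); last rewrite comp_polyA; auto.
Qed.

Lemma fps_compTr a : fps_comp a (fpsT K) = a.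
Proof.
apply: functional_extensionality => n.
by apply: (@agree_upto_coef n _ _ (fps_trunc n a \Po 'X)); last rewrite comp_polyXr; auto.
Qed.

Lemma fps_compT a : a 0%N = 0 -> fps_comp (fpsT K) a = a.
Proof.
move=> a0; apply: functional_extensionality => n.
by apply: (@agree_upto_coef n _ _ ('X \Po fps_trunc n a)); last rewrite comp_polyX; auto.
Qed.

Lemma rentry0 g f n : rentry g f n 0 = g n.
Proof. by rewrite /rentry fps_mulr1. Qed.

Lemma coef_mul_comp_tf g f b n :
  fps_mul g (fps_comp b (fps_mul (fpsT K) f)) n
  = \sum_(j < n.+1) b j * rentry g f (n - j) j.
Proof.
set t := fps_trunc n.
have ag : agree_upto n (fps_mul g (fps_comp b (fps_mul (fpsT K) f)))
                       (t g * (t b \Po ('X * t f))) by auto.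
rewrite ag // coef_mul_comp_XM; apply: eq_bigr => -[j /= lt_jn] _.
have agj : agree_upto n (fps_mul g (fps_pow f j)) (t g * t f ^+ j) by auto.
by rewrite /rentry agj ?leq_subr // coef_poly lt_jn.
Qed.

Lemma typeII_Bseq_g_eq g f b : g 0%N = 1 -> is_typeII_Bseq g f b ->
  g = fps_add (fps1 K) (fps_mul (fps_mul (fpsT K) g) (fps_comp b (fps_mul (fpsT K) f))).
Proof.
move=> g0 Bb; apply: functional_extensionality => n.
rewrite /fps_add -fps_mulA coef_fps_mulT; case: n => [|n]; first by rewrite g0 addr0.
by rewrite add0r coef_mul_comp_tf -Bb rentry0.
Qed.

Lemma typeII_Bseq_Zseq_comp g f b Z : g 0%N = 1 -> f 0%N = 0 ->
  is_typeII_Bseq g f b -> is_Zseq g f Z ->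
  fps_comp Z f = fps_comp b (fps_mul (fpsT K) f).
Proof.
move=> g0 f0 Bb Zg; have gE := typeII_Bseq_g_eq g0 Bb.
apply: functional_extensionality => n; set t := fps_trunc n.+1.
have agG : agree_upto n.+1 g (1 + 'X * t g * (t b \Po ('X * t f))).
  by rewrite {1}gE; auto.
have ag1 : agree_upto n.+1 (fps1 K) (t g * (1 - 'X * (t Z \Po t f))).
  by rewrite -{1}Zg; auto.
have agZ : agree_upto n.+1 (fps_comp Z f) (t Z \Po t f) by auto.
have agB : agree_upto n.+1 (fps_comp b (fps_mul (fpsT K) f)) (t b \Po ('X * t f)).
  by auto.
set G := t g in agG ag1 *; set ZF := t Z \Po t f in ag1 agZ *.
set BF := t b \Po ('X * t f) in agG agB *.
have eX : eq_upto n.+1 ('X * (G * ZF)) ('X * (G * BF)).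
  rewrite (_ : 'X * (G * ZF) = G - G * (1 - 'X * ZF)); last by ring.
  rewrite (_ : 'X * (G * BF) = 1 + 'X * G * BF - 1); last by ring.
  exact: eq_uptoB (agree_upto_eq (agree_upto_trunc g) agG) (agree_upto_eq ag1 (@agree_upto1 n.+1)).
have G0 : G`_0 != 0 by rewrite coef_poly g0 oner_neq0.
by rewrite agZ // agB // (eq_upto_mulfI G0 (eq_upto_mulXI eX)).
Qed.

Lemma comp_eq_mulT_inverse Z b f fb : f 0%N = 0 -> fb 0%N = 0 ->
  fps_comp f fb = fpsT K ->
  fps_comp Z f = fps_comp b (fps_mul (fpsT K) f) ->
  Z = fps_comp b (fps_mul (fpsT K) fb).
Proof.
move=> f0 fb0 ffb ZfE.
rewrite -[Z]fps_compTr -{1}ffb fps_compA // ZfE -fps_compA //.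
by rewrite fps_compM // fps_compT // ffb fps_mulC.
Qed.

End PowerSeries.

Theorem proposition3p1 (K : fieldType) (g f Bh Z fb : fps K) :
  riordan g f ->
  is_typeII_Bseq g f Bh ->
  is_Zseq g f Z ->
  comp_inverse fb f ->
  [/\ g = fps_add (fps1 K) (fps_mul (fps_mul (fpsT K) g) (fps_comp Bh (fps_mul (fpsT K) f))),
      fps_comp Z f = fps_comp Bh (fps_mul (fpsT K) f)
    & Z = fps_comp Bh (fps_mul (fpsT K) fb)].
Proof.
move=> [g0 [f0 _]] Bb Zg [fb0 [ffb _]].
have ZfE := typeII_Bseq_Zseq_comp g0 f0 Bb Zg.
by split; [exact: typeII_Bseq_g_eq Bb | exact: ZfE | exact: comp_eq_mulT_inverse ZfE].
Qed.
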